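(* Let $G$ be a nearest point graph on $n=pq$ vertices with at least one edge. Then $\rho(G)$ is separable in $\mathbb{C}^p_A\otimes\mathbb{C}^q_B$ if and only if $\Delta(G)=\Delta(G^{\Gamma_B})$.
   Context: A nearest point graph: consider a rectangular lattice of $pq$ points in $p$ rows and $q$ columns, adjacent points in a row or column at distance $1$; the vertex in row $i$, column $j$ is labelled $u_iw_j$. A nearest point graph is a simple graph on these vertices all of whose edges join points at Euclidean distance $1$ or $\sqrt2$, i.e. every edge $\{u_iw_j,u_{i'}w_{j'}\}$ satisfies $(i-i')^2+(j-j')^2\in\{1,2\}$. For a simple graph $G=(V,E)$: $M(G)$ is the adjacency matrix, $\Delta(G)$ the diagonal degree matrix, $L(G)=\Delta(G)-M(G)$, and $\rho(G)=\frac{1}{2|E|}L(G)$. Vertex $u_iw_j$ is identified with $|u_i\rangle\otimes|w_j\rangle$, where $\{|u_i\rangle\}$, $\{|w_j\rangle\}$ are orthonormal bases of $\mathbb{C}^p_A$, $\mathbb{C}^q_B$. The partial transpose $G^{\Gamma_B}=(V,E')$ has $\{u_iw_j,u_kw_l\}\in E'$ iff $\{u_iw_l,u_kw_j\}\in E$. Separable means a convex combination of product states. *)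

From HB Require Import structures.
From mathcomp Require Import all_boot all_order all_algebra.
Set Implicit Arguments. Unset Strict Implicit. Unset Printing Implicit Defensive.
Import Order.TTheory GRing.Theory Num.Theory.
Local Open Scope ring_scope.

(* Linear operators on C^I (I a finite index type, the orthonormal basis),
   written as their matrix entries in that basis. *)
Definition op (C : Type) (I : finType) := I -> I -> C.

Section Ops.
Variable C : numClosedFieldType.

Definition hermitian (I : finType) (M : op C I) : Prop :=
  forall i j, M j i = (M i j)^*.

Definition psd (I : finType) (M : op C I) : Prop :=
  hermitian M /\ forall x : I -> C, 0 <= \sum_i \sum_j (x i)^* * M i j * x j.

Definition trace (I : finType) (M : op C I) : C := \sum_i M i i.

Definition density (I : finType) (M : op C I) : Prop := psd M /\ trace M = 1.

(* tensor (Kronecker) product: |u_i> (x) |w_j> is the basis vector (i,j) *)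
Definition tensor (I J : finType) (A : op C I) (B : op C J) : op C (I * J)%type :=
  fun x y => A x.1 y.1 * B x.2 y.2.

Definition separable (p q : nat) (rho : op C ('I_p * 'I_q)%type) : Prop :=
  exists (N : nat) (w : 'I_N -> C) (rA : 'I_N -> op C 'I_p) (rB : 'I_N -> op C 'I_q),
    [/\ forall k, 0 <= w k,
        \sum_k w k = 1,
        forall k, density (rA k) /\ density (rB k)
      & forall x y, rho x y = \sum_k w k * tensor (rA k) (rB k) x y].
End Ops.

(* Vertices: u_i w_j  ~  (i, j) : 'I_p * 'I_q.  A simple graph is a symmetric
   irreflexive adjacency relation. *)
Definition vert (p q : nat) := ('I_p * 'I_q)%type.

Definition simple_graph (V : finType) (e : rel V) : Prop :=
  (forall x, ~~ e x x) /\ (forall x y, e x y = e y x).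

Definition sqdist (p q : nat) (x y : vert p q) : nat :=
  ((((x.1 : nat) - y.1) + (y.1 - x.1)) ^ 2 + (((x.2 : nat) - y.2) + (y.2 - x.2)) ^ 2)%N.

Definition nearest_point_graph (p q : nat) (e : rel (vert p q)) : Prop :=
  simple_graph e /\ forall x y, e x y -> sqdist x y = 1%N \/ sqdist x y = 2%N.

Definition edges (V : finType) (e : rel V) : {set {set V}} :=
  [set [set x.1; x.2] | x in [set x : V * V | e x.1 x.2]].

Definition deg (V : finType) (e : rel V) (x : V) : nat := #|[set y | e x y]|.

Definition laplacian (C : numClosedFieldType) (V : finType) (e : rel V) : op C V :=
  fun x y => (if x == y then (deg e x)%:R else 0) - (if e x y then 1 else 0).

Definition rhoG (C : numClosedFieldType) (V : finType) (e : rel V) : op C V :=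
  fun x y => laplacian C e x y / (2 * #|edges e|)%:R.

Definition ptrans (p q : nat) (e : rel (vert p q)) : rel (vert p q) :=
  fun x y => e (x.1, y.2) (y.1, x.2).

From Pilot Require Import Defs.
From mathcomp Require Import all_boot all_order all_algebra.
From mathcomp Require Import zify ring.
Set Implicit Arguments. Unset Strict Implicit. Unset Printing Implicit Defensive.
Import Order.TTheory GRing.Theory Num.Theory.

(* The rows of rho(G) sum to 0.  If rho(G) = sum_k w_k A_k (x) B_k is
   separable, its total entry sum sum_k w_k (sum A_k) (sum B_k) thus vanishes
   with nonnegative terms, so for each k either A_k or B_k kills the all-ones
   vector.  This
   survives the partial transpose, so rho(G)^Gamma_B also has zero row sums,
   i.e. Delta(G) = Delta(G^Gamma_B).

   Conversely, for a nearest point graph equal degrees force G = G^Gamma_B, by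
   induction on i + j: the neighbourhoods of u_i w_j in G and G^Gamma_B can
   only differ at its diagonal neighbour u_(i+1) w_(j+1), and the degree count
   rules that out.  Then L(G) is the sum, over edges, of half the edge
   Laplacian of the edge plus that of its partial transpose, and by the
   parallelogram law each such sum is a sum of two product rank-one operators. *)

Lemma card_agree_at (T : finType) (A B : {pred T}) (y : T) :
  #|A| = #|B| -> {in predC1 y, A =i B} -> (y \in A) = (y \in B).
Proof.
move=> eqAB AB; have eqD1 : [predD1 A & y] =i [predD1 B & y].
  by move=> z; rewrite !inE; case: eqP => //= /eqP zy; apply: AB; rewrite inE.
move: eqAB; rewrite (cardD1 y A) (cardD1 y B) (eq_card eqD1) => /addIn.
by case: (y \in A); case: (y \in B).
Qed.

Lemma eq_pred_of_card (T : finType) (A B : {pred T}) :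
  #|A| = #|B| -> (forall y z, (y \in A) != (y \in B) -> (z \in A) != (z \in B) -> y = z) ->
  A =i B.
Proof.
move=> eqAB AB y; have [//|yAB] := eqVneq (y \in A) (y \in B).
apply: card_agree_at => // z; rewrite inE => zy.
have [//|zAB] := eqVneq (z \in A) (z \in B).
by move: zy; rewrite (AB _ _ yAB zAB) eqxx.
Qed.

Lemma card_adjacent_pairs (V : finType) (e : rel V) : simple_graph e ->
  #|[set xy : V * V | e xy.1 xy.2]| = (2 * #|edges e|)%N.
Proof.
move=> [irr sym]; set P := [set xy : V * V | e xy.1 xy.2].
have fiber S : S \in edges e -> #|[set xy in P | [set xy.1; xy.2] == S]| = 2.
  case/imsetP=> -[x y]; rewrite inE /= => exy ->.
  have xy : x != y by apply: contraTneq exy => ->; exact: irr.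
  have -> : 2 = #|[set (x, y); (y, x)]| by rewrite cards2 xpair_eqE (negbTE xy).
  apply: eq_card => -[a b].
  rewrite /P !inE !xpair_eqE /=.
  apply/andP/orP => [[eab /eqP Sab]|[]/andP[/eqP-> /eqP->]].
  - move: eab; have := set21 a b; have := set22 a b; rewrite Sab.
    move=> /set2P[]-> /set2P[]-> eab; rewrite ?eqxx;
      first [by left | by right | by rewrite (negbTE (irr _)) in eab].
  - by apply/andP; rewrite exy eqxx.
  - by apply/andP; rewrite sym exy setUC eqxx.
have -> : #|P| = \sum_(xy in P) 1 by rewrite sum1_card.
rewrite (partition_big_imset (fun xy : V * V => [set xy.1; xy.2])).
rewrite mulnC -sum_nat_const; apply: eq_bigr => S /fiber <-.
by rewrite sum1dep_card.
Qed.

Section NearestPointGraph.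
Variables p q : nat.
Implicit Types (e : rel (vert p q)) (x y z : vert p q).

Lemma sqdist_ptrans x y : sqdist (x.1, y.2) (y.1, x.2) = sqdist x y.
Proof. by rewrite /sqdist /= [(y.2 - x.2 + _)%N]addnC. Qed.

Lemma ptrans_npg e : nearest_point_graph e -> nearest_point_graph (ptrans e).
Proof.
move=> [[irr sym] near]; split; first split.
- by move=> [x1 x2]; apply: irr.
- by move=> x y; rewrite /ptrans sym.
- by move=> x y /near; rewrite sqdist_ptrans.
Qed.

Lemma npg_diagonal_neighbour e x y : nearest_point_graph e -> e x y ->
  (x.1 < y.1)%N -> (x.2 < y.2)%N -> y.1 = x.1.+1 :> nat /\ y.2 = x.2.+1 :> nat.
Proof. by case=> _ /[apply]; rewrite /sqdist -!mulnn => -[] ? ? ?; nia. Qed.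

(* {x, y} is the partial transpose of {(x.1, y.2), (y.1, x.2)}; unless y lies
   strictly above-right of x, these are the same edge or one of the two points
   has a smaller coordinate sum than x. *)
Lemma ptrans_agree_below e x y : (forall x y, e x y = e y x) ->
  (forall z, (z.1 + z.2 < x.1 + x.2)%N -> forall y, e z y = ptrans e z y) ->
  ~~ ((x.1 < y.1)%N && (x.2 < y.2)%N) -> e x y = ptrans e x y.
Proof.
move=> sym IH; case: x y IH => [x1 x2] [y1 y2] IH /=; rewrite /ptrans /=.
rewrite negb_and -!leqNgt => /orP[]; rewrite leq_eqVlt => /orP[/eqP/val_inj-> | lt].
- by rewrite sym.
- by rewrite sym [RHS]sym (IH (y1, x2)) //= ltn_add2r.
- by [].
- by rewrite (IH (x1, y2)) //= ltn_add2l.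
Qed.

Lemma ptrans_eq_of_deg e : nearest_point_graph e ->
  (forall v, deg e v = deg (ptrans e) v) -> forall x y, ptrans e x y = e x y.
Proof.
move=> npg degE; suff agree n : forall x, (x.1 + x.2 < n)%N ->
    forall y, e x y = ptrans e x y by move=> x y; rewrite (agree (x.1 + x.2).+1).
elim: n => [//|n IH] x x_n y.
have off_diag z : (z \in [set y | e x y]) != (z \in [set y | ptrans e x y]) ->
    z.1 = x.1.+1 :> nat /\ z.2 = x.2.+1 :> nat.
  rewrite !inE => exz.
  have /andP[lt1 lt2] : (x.1 < z.1)%N && (x.2 < z.2)%N.
    apply: contraNT exz => ?; apply/eqP/ptrans_agree_below => //.
    - by case: npg => -[].
    - by move=> w w_x; apply: IH; apply: leq_trans w_x _.
  have /orP[exz' | ptxz] : e x z || ptrans e x z by move: exz; case: (e x z) => //= /negPn.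
    exact: npg_diagonal_neighbour exz' lt1 lt2.
  exact: npg_diagonal_neighbour (ptrans_npg npg) ptxz lt1 lt2.
have := eq_pred_of_card (degE x) _ y; rewrite !inE; apply=> y' z.
move=> /off_diag[y1 y2] /off_diag[z1 z2].
case: y' z y1 y2 z1 z2 => [a1 a2] [b1 b2] /= a1E a2E b1E b2E.
by congr pair; apply: val_inj; rewrite /= ?a1E ?b1E ?a2E ?b2E.
Qed.

End NearestPointGraph.

Local Open Scope ring_scope.

Section Operators.
Variable C : numClosedFieldType.

Definition ind (b : bool) : C := if b then 1 else 0.

Lemma conj_ind b : (ind b)^* = ind b.
Proof. by case: b; rewrite /ind ?conjC1 ?conjC0. Qed.

Lemma ind_and a b : ind (a && b) = ind a * ind b.
Proof. by case: a; case: b; rewrite /ind ?mul1r ?mul0r. Qed.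

Lemma sum_indl (I : finType) (i0 : I) (f : I -> C) : \sum_i ind (i == i0) * f i = f i0.
Proof.
rewrite (bigD1 i0) //= eqxx mul1r big1 ?addr0 // => i /negbTE i_i0.
by rewrite /ind i_i0 mul0r.
Qed.

Lemma sum_indr (I : finType) (i0 : I) (f : I -> C) : \sum_i f i * ind (i == i0) = f i0.
Proof. by rewrite -(sum_indl i0); apply: eq_bigr => i _; rewrite mulrC. Qed.

Lemma sum_ind_card (I : finType) (P : pred I) : \sum_i ind (P i) = #|[set i | P i]|%:R.
Proof.
rewrite /ind -big_mkcond sumr_const; congr (_ *+ _).
by apply: eq_card => i; rewrite !inE.
Qed.

Definition qform (I : finType) (M : op C I) (x : I -> C) :=
  \sum_i \sum_j (x i)^* * M i j * x j.

Lemma qform_const_delta (I : finType) (M : op C I) a b i0 :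
  qform M (fun i => a + b * ind (i == i0)) =
  a^* * a * (\sum_i \sum_j M i j) + a^* * b * (\sum_i M i i0)
  + b^* * a * (\sum_j M i0 j) + b^* * b * M i0 i0.
Proof.
rewrite /qform.
have E i j : (a + b * ind (i == i0))^* * M i j * (a + b * ind (j == i0)) =
   a^* * a * M i j + a^* * b * (M i j * ind (j == i0)) + b^* * a * (ind (i == i0) * M i j)
   + b^* * b * (ind (i == i0) * (M i j * ind (j == i0))).
  by rewrite rmorphD rmorphM /= conj_ind; ring.
under eq_bigr => i _ do under eq_bigr => j _ do rewrite E.
under eq_bigr => i _ do rewrite !big_split /= -!mulr_sumr.
rewrite !big_split /= -!mulr_sumr.
congr (_ + _ + _ + _); congr (_ * _).
- by apply: eq_bigr => i _; rewrite sum_indr.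
- by rewrite sum_indl.
- by under eq_bigr => i _ do rewrite sum_indr; rewrite sum_indl.
Qed.

Lemma psd_diag_ge0 (I : finType) (M : op C I) i : psd M -> 0 <= M i i.
Proof.
move=> [_ /(_ (fun j => 0 + 1 * ind (j == i)))].
by rewrite -/(qform M _) qform_const_delta conjC0 conjC1 !(mul0r, mulr0, mul1r, add0r).
Qed.

Lemma psd_sum_ge0 (I : finType) (M : op C I) : psd M -> 0 <= \sum_i \sum_j M i j.
Proof.
case=> _ /(_ (fun=> 1)).
by under eq_bigr => i _ do under eq_bigr => j _ do rewrite conjC1 mul1r mulr1.
Qed.

(* Test the form at (m + 1) 1 - r e_i, with m = M i i and r the i-th row sum:
   its value is - |r|^2 (m + 2). *)
Lemma psd_row_sum0 (I : finType) (M : op C I) : psd M ->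
  \sum_i \sum_j M i j = 0 -> forall i, \sum_j M i j = 0.
Proof.
move=> psdM sum0 i0; set r := \sum_j M i0 j; set m := M i0 i0.
have m_ge0 : 0 <= m by apply: psd_diag_ge0.
have col : \sum_i M i i0 = r^*.
  by rewrite /r rmorph_sum; apply: eq_bigr => i _; case: psdM => ->.
have mR : m^* = m by apply/CrealP/ger0_real.
have := psdM.2 (fun i => (m + 1) + (- r) * ind (i == i0)).
rewrite -/(qform M _) qform_const_delta sum0 col -/r -/m.
rewrite !rmorphD rmorphN /= mR conjC1.
have -> : (m + 1) * (m + 1) * 0 + (m + 1) * - r * r^* + (- r^* * (m + 1) * r)
   + (- r^* * - r * m) = - (r * r^* * (m + 2)) by ring.
rewrite oppr_ge0 => le0.
have : r * r^* * (m + 2) = 0.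
  by apply/eqP; rewrite eq_le le0 mulr_ge0 ?mul_conjC_ge0 ?addr_ge0.
have m2_gt0 : 0 < m + 2 by rewrite ltr_wpDl.
by move/eqP; rewrite mulf_eq0 mul_conjC_eq0 (gt_eqF m2_gt0) orbF => /eqP.
Qed.

Lemma hermitian_col_sum0 (I : finType) (M : op C I) : Defs.hermitian M ->
  (forall i, \sum_j M i j = 0) -> forall j, \sum_i M i j = 0.
Proof.
move=> hM row0 j; transitivity ((\sum_i M j i)^*); last by rewrite row0 conjC0.
by rewrite rmorph_sum; apply: eq_bigr => i _; rewrite hM.
Qed.

Lemma sum_pair_mul (I J : finType) (f : I -> C) (g : J -> C) :
  \sum_(z : (I * J)%type) f z.1 * g z.2 = (\sum_i f i) * (\sum_j g j).
Proof. by rewrite big_distrlr pair_bigA. Qed.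

Lemma sum_tensor (I J : finType) (A : op C I) (B : op C J) :
  \sum_z \sum_w tensor A B z w = (\sum_i \sum_i' A i i') * (\sum_j \sum_j' B j j').
Proof.
rewrite -sum_pair_mul; apply: eq_bigr => z _.
by rewrite -sum_pair_mul.
Qed.

Lemma separable_ptrans_row_sum0 (p q : nat) (r : op C ('I_p * 'I_q)%type) : separable r ->
  (forall z, \sum_w r z w = 0) -> forall z, \sum_w r (z.1, w.2) (w.1, z.2) = 0.
Proof.
move=> [N [w [rA [rB [w_ge0 _ dens rE]]]]] row0.
have sum0 : \sum_k w k * ((\sum_i \sum_j rA k i j) * (\sum_i \sum_j rB k i j)) = 0.
  transitivity (\sum_z \sum_w0 r z w0); last by rewrite big1.
  under [RHS]eq_bigr => z _ do under eq_bigr => w1 _ do rewrite rE.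
  under [RHS]eq_bigr => z _ do rewrite exchange_big.
  rewrite [RHS]exchange_big; apply: eq_bigr => k _.
  rewrite -sum_tensor mulr_sumr; apply: eq_bigr => z _.
  by rewrite mulr_sumr.
have term0 k : w k * ((\sum_i \sum_j rA k i j) * (\sum_i \sum_j rB k i j)) = 0.
  apply: (psumr_eq0P _ sum0) => // k' _; have [[psdA _] [psdB _]] := dens k'.
  by rewrite mulr_ge0 ?mulr_ge0 ?psd_sum_ge0.
move=> z; under eq_bigr => w1 _ do rewrite rE /tensor /=.
rewrite exchange_big big1 // => k _.
rewrite -mulr_sumr (sum_pair_mul (fun i => rA k z.1 i) (fun j => rB k j z.2)).
have [[psdA _] [psdB _]] := dens k.
move/eqP: (term0 k); rewrite !mulf_eq0 => /orP[/eqP-> | /orP[] /eqP sum0k];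
  first by rewrite mul0r.
- by rewrite (psd_row_sum0 psdA sum0k) mul0r mulr0.
- by rewrite (hermitian_col_sum0 psdB.1 (psd_row_sum0 psdB sum0k)) !mulr0.
Qed.

Definition rank1 (I : finType) (a : I -> C) : op C I := fun i j => a i * (a j)^*.

Lemma density_rank1 (I : finType) (a : I -> C) : \sum_i a i * (a i)^* != 0 ->
  density (fun i j => rank1 a i j / \sum_i a i * (a i)^*).
Proof.
set t := \sum_i _ => t_neq0.
have t_ge0 : 0 <= t by apply: sumr_ge0 => i _; apply: mul_conjC_ge0.
have tR : t^* = t by apply/CrealP/ger0_real.
split; [split|].
- by move=> i j; rewrite /rank1 rmorphM fmorphV /= tR rmorphM /= conjCK [(a i)^* * _]mulrC.
- move=> x; have ax : (\sum_i (x i)^* * a i)^* = \sum_j (a j)^* * x j.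
    by rewrite rmorph_sum; apply: eq_bigr => j _; rewrite rmorphM /= conjCK mulrC.
  have -> : \sum_i \sum_j (x i)^* * (rank1 a i j / t) * x j =
      (\sum_i (x i)^* * a i) * (\sum_i (x i)^* * a i)^* / t.
    rewrite ax mulr_suml mulr_suml; apply: eq_bigr => i _.
    by rewrite mulr_sumr mulr_suml; apply: eq_bigr => j _; rewrite /rank1; ring.
  by rewrite divr_ge0 ?mul_conjC_ge0.
- by rewrite /trace /rank1 -mulr_suml divff.
Qed.

Lemma sum_mul_conjC_eq0 (I : finType) (a : I -> C) :
  \sum_i a i * (a i)^* = 0 -> forall i, a i = 0.
Proof.
move=> sum0 i; apply/eqP; rewrite -mul_conjC_eq0; apply/eqP.
by apply: (psumr_eq0P _ sum0) => // j _; apply: mul_conjC_ge0.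
Qed.

Section SeparableCone.
Variables p q : nat.
Implicit Types r : op C ('I_p * 'I_q)%type.

Definition sep_cone r :=
  exists N (w : 'I_N -> C) (rA : 'I_N -> op C 'I_p) (rB : 'I_N -> op C 'I_q),
    [/\ forall k, 0 <= w k, forall k, density (rA k) /\ density (rB k)
      & forall x y, r x y = \sum_k w k * tensor (rA k) (rB k) x y].

Lemma sep_cone_ext r1 r2 : (forall x y, r1 x y = r2 x y) -> sep_cone r1 -> sep_cone r2.
Proof.
move=> r12 [N [w [rA [rB [w_ge0 dens rE]]]]]; exists N, w, rA, rB; split => // x y.
by rewrite -r12 rE.
Qed.

Lemma sep_cone0 r : (forall x y, r x y = 0) -> sep_cone r.
Proof.
move=> r0; exists 0%N, (fun _ => 0), (fun _ _ _ => 0), (fun _ _ _ => 0).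
by split=> [[] | [] | x y]; rewrite ?r0 ?big_ord0.
Qed.

Lemma sep_coneD r1 r2 : sep_cone r1 -> sep_cone r2 -> sep_cone (fun x y => r1 x y + r2 x y).
Proof.
move=> [N1 [w1 [A1 [B1 [w1_ge0 dens1 r1E]]]]] [N2 [w2 [A2 [B2 [w2_ge0 dens2 r2E]]]]].
pose glue T (f1 : 'I_N1 -> T) (f2 : 'I_N2 -> T) k :=
  match split k with inl i => f1 i | inr j => f2 j end.
exists (N1 + N2)%N, (glue _ w1 w2), (glue _ A1 A2), (glue _ B1 B2); split.
- by move=> k; rewrite /glue; case: (split k).
- by move=> k; rewrite /glue; case: (split k).
- move=> x y; rewrite r1E r2E big_split_ord /glue; congr (_ + _); apply: eq_bigr => i _.
  + by rewrite (unsplitK (inl i) : split (lshift N2 i) = inl i).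
  + by rewrite (unsplitK (inr i) : split (rshift N1 i) = inr i).
Qed.

Lemma sep_coneZ c r : 0 <= c -> sep_cone r -> sep_cone (fun x y => c * r x y).
Proof.
move=> c_ge0 [N [w [rA [rB [w_ge0 dens rE]]]]]; exists N, (fun k => c * w k), rA, rB.
split=> // [k | x y]; first exact: mulr_ge0.
by rewrite rE mulr_sumr; apply: eq_bigr => k _; rewrite mulrA.
Qed.

Lemma sep_cone_sum (I : finType) (F : I -> op C ('I_p * 'I_q)%type) :
  (forall i, sep_cone (F i)) -> sep_cone (fun x y => \sum_i F i x y).
Proof.
move=> coneF; rewrite unlock; elim: (index_enum I) => [|i s IH] /=.
  exact: sep_cone0.
exact: sep_coneD.
Qed.

Lemma sep_cone_rank1 (a : 'I_p -> C) (b : 'I_q -> C) : sep_cone (tensor (rank1 a) (rank1 b)).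
Proof.
have [/sum_mul_conjC_eq0 a0 | na] := eqVneq (\sum_i a i * (a i)^*) 0.
  by apply: sep_cone0 => x y; rewrite /tensor /rank1 !a0 !mul0r.
have [/sum_mul_conjC_eq0 b0 | nb] := eqVneq (\sum_i b i * (b i)^*) 0.
  by apply: sep_cone0 => x y; rewrite /tensor /rank1 !b0 !mul0r mulr0.
exists 1%N, (fun _ => (\sum_i a i * (a i)^*) * (\sum_i b i * (b i)^*)),
  (fun _ i j => rank1 a i j / \sum_i a i * (a i)^*),
  (fun _ i j => rank1 b i j / \sum_i b i * (b i)^*); split.
- by move=> _; rewrite mulr_ge0 // sumr_ge0 // => i _; apply: mul_conjC_ge0.
- by move=> _; split; apply: density_rank1.
- by move=> x y; rewrite big_ord1 /tensor; field; rewrite na nb.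
Qed.

Lemma separable_of_cone r : sep_cone r -> trace r = 1 -> separable r.
Proof.
move=> [N [w [rA [rB [w_ge0 dens rE]]]]] tr1; exists N, w, rA, rB; split => //.
rewrite -tr1 /trace; under [RHS]eq_bigr => z _ do rewrite rE.
rewrite exchange_big; apply: eq_bigr => k _.
rewrite -mulr_sumr /tensor (sum_pair_mul (fun i => rA k i i) (fun j => rB k j j)).
by have [[_ trA] [_ trB]] := dens k; move: trA trB; rewrite /trace => -> ->; rewrite !mulr1.
Qed.

End SeparableCone.

Section Laplacian.
Variable V : finType.
Implicit Types (e : rel V) (x y z w : V).

Lemma laplacianE e z w : laplacian C e z w = ind (z == w) * (deg e z)%:R - ind (e z w).
Proof. by rewrite /laplacian /ind; case: (z == w); rewrite ?mul1r ?mul0r. Qed.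

Lemma laplacian_row_sum0 e z : \sum_w laplacian C e z w = 0.
Proof.
under eq_bigr => w _ do rewrite laplacianE eq_sym.
by rewrite sumrB sum_indl sum_ind_card subrr.
Qed.

Definition edge_op x y : op C V := rank1 (fun v => ind (v == x) - ind (v == y)).

Lemma laplacian_edge_decomp e : (forall x y, e x y = e y x) -> forall z w,
  laplacian C e z w = 2^-1 * \sum_x \sum_y ind (e x y) * edge_op x y z w.
Proof.
move=> sym z w; pose h x y := ind (z == x) * (ind (w == x) - ind (w == y)).
have edgeE x y : edge_op x y z w = h x y + h y x.
  by rewrite /edge_op /rank1 /h rmorphB /= !conj_ind; ring.
have swapE (F : V -> V -> C) :
    \sum_x \sum_y ind (e x y) * F y x = \sum_x \sum_y ind (e x y) * F x y.
  by rewrite exchange_big; apply: eq_bigr => x _; apply: eq_bigr => y _; rewrite sym.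
have hE : \sum_x \sum_y ind (e x y) * h x y = laplacian C e z w.
  transitivity (\sum_x ind (x == z) * \sum_y ind (e x y) * (ind (w == x) - ind (w == y))).
    apply: eq_bigr => x _; rewrite mulr_sumr; apply: eq_bigr => y _.
    by rewrite /h eq_sym; ring.
  rewrite sum_indl laplacianE eq_sym; under eq_bigr => y _ do rewrite mulrBr [w == y]eq_sym.
  by rewrite sumrB -mulr_suml sum_ind_card mulrC sum_indr.
under eq_bigr => x _ do under eq_bigr => y _ do rewrite edgeE mulrDr.
under eq_bigr => x _ do rewrite big_split /=.
rewrite big_split /= (swapE h) hE.
by field.
Qed.

Lemma trace_laplacian e : simple_graph e -> trace (laplacian C e) = (2 * #|edges e|)%:R.
Proof.
move=> [irr sym]; rewrite -card_adjacent_pairs // -sum_ind_card.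
rewrite -(pair_bigA _ (fun x y => ind (e x y))); apply: eq_bigr => x _.
by rewrite laplacianE eqxx (negbTE (irr x)) mul1r subr0 sum_ind_card.
Qed.

End Laplacian.

Section LatticeLaplacian.
Variables p q : nat.
Implicit Types (e : rel (vert p q)) (x y z w : vert p q).

Lemma laplacian_ptrans_row_sum e z :
  \sum_w laplacian C e (z.1, w.2) (w.1, z.2) = (deg e z)%:R - (deg (ptrans e) z)%:R.
Proof.
under eq_bigr => w _ do rewrite laplacianE.
rewrite sumrB sum_ind_card; congr (_ - _).
transitivity (\sum_w ind (w == z) * (deg e (z.1, w.2))%:R); last by rewrite sum_indl; case: z.
apply: eq_bigr => -[w1 w2] _; congr (ind _ * _).
by case: z => z1 z2; rewrite /= !xpair_eqE [z1 == _]eq_sym.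
Qed.

Lemma edge_sum_ptrans e : (forall x y, ptrans e x y = e x y) -> forall z w,
  \sum_x \sum_y ind (e x y) * edge_op x y z w =
  \sum_x \sum_y ind (e x y) * edge_op (x.1, y.2) (y.1, x.2) z w.
Proof.
move=> ptransE z w; rewrite !pair_bigA /=.
pose swap (xy : vert p q * vert p q) := ((xy.1.1, xy.2.2), (xy.2.1, xy.1.2)).
have swapK : involutive swap by move=> [[x1 x2] [y1 y2]].
rewrite [RHS](reindex_inj (inv_inj swapK)); apply: eq_bigr => -[[x1 x2] [y1 y2]] _ /=.
by rewrite -[e (x1, y2) (y1, x2)]/(ptrans e (x1, x2) (y1, y2)) ptransE.
Qed.

(* Parallelogram law: u (x) v - u' (x) v' and u (x) v' - u' (x) v are the half
   sum and half difference of (u - u') (x) (v + v') and (u + u') (x) (v - v'). *)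
Lemma edge_op_swap_tensor x y z w :
  edge_op x y z w + edge_op (x.1, y.2) (y.1, x.2) z w =
  2^-1 * (tensor (rank1 (fun i => ind (i == x.1) - ind (i == y.1)))
                 (rank1 (fun j => ind (j == x.2) + ind (j == y.2))) z w
        + tensor (rank1 (fun i => ind (i == x.1) + ind (i == y.1)))
                 (rank1 (fun j => ind (j == x.2) - ind (j == y.2))) z w).
Proof.
case: x y z w => [x1 x2] [y1 y2] [z1 z2] [w1 w2].
rewrite /edge_op /tensor /rank1 /= !rmorphB !rmorphD /= !conj_ind !xpair_eqE !ind_and.
by field.
Qed.

Lemma laplacian_sep_cone e : (forall x y, e x y = e y x) ->
  (forall x y, ptrans e x y = e x y) -> sep_cone (laplacian C e).
Proof.
move=> sym ptransE.
pose T x y z w := tensor (rank1 (fun i => ind (i == x.1) - ind (i == y.1)))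
                         (rank1 (fun j => ind (j == x.2) + ind (j == y.2))) z w
                + tensor (rank1 (fun i => ind (i == x.1) + ind (i == y.1)))
                         (rank1 (fun j => ind (j == x.2) - ind (j == y.2))) z w.
apply: (sep_cone_ext (r1 := fun z w =>
    \sum_x \sum_y 2^-1 * 2^-1 * 2^-1 * ind (e x y) * T x y z w)).
  move=> z w; rewrite laplacian_edge_decomp //.
  transitivity (2^-1 * (2^-1 * \sum_x \sum_y ind (e x y) *
      (edge_op x y z w + edge_op (x.1, y.2) (y.1, x.2) z w))).
    rewrite !mulr_sumr; apply: eq_bigr => x _; rewrite !mulr_sumr; apply: eq_bigr => y _.
    by rewrite edge_op_swap_tensor /T; ring.
  under eq_bigr => x _ do under eq_bigr => y _ do rewrite mulrDr.
  under eq_bigr => x _ do rewrite big_split /=.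
  by rewrite big_split /= -edge_sum_ptrans //; field.
apply: sep_cone_sum => x; apply: sep_cone_sum => y.
apply: sep_coneZ; first by rewrite !mulr_ge0 ?invr_ge0 // /ind; case: (e x y).
by apply: sep_coneD; apply: sep_cone_rank1.
Qed.

End LatticeLaplacian.

End Operators.

Theorem theorem3 (C : numClosedFieldType) (p q : nat) (e : rel (vert p q)) :
  nearest_point_graph e ->
  (exists x y, e x y) ->
  (separable (rhoG C e) <-> (forall v, deg e v = deg (ptrans e) v)).
Proof.
move=> npg [x0 [y0 exy]]; have [[irr sym] _] := npg.
have norm_neq0 : (2 * #|edges e|)%:R != 0 :> C.
  rewrite pnatr_eq0 -card_adjacent_pairs // -lt0n.
  by apply/card_gt0P; exists (x0, y0); rewrite inE.
split=> [sep v | degE].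
- have rho_row0 z : \sum_w rhoG C e z w = 0.
    by rewrite /rhoG -mulr_suml laplacian_row_sum0 mul0r.
  move/eqP: (separable_ptrans_row_sum0 sep rho_row0 v).
  rewrite /rhoG -mulr_suml laplacian_ptrans_row_sum mulf_eq0 invr_eq0 (negbTE norm_neq0).
  by rewrite orbF subr_eq0 eqr_nat => /eqP.
- apply: separable_of_cone.
    apply: (sep_cone_ext (r1 := fun z w => (2 * #|edges e|)%:R^-1 * laplacian C e z w)).
      by move=> z w; rewrite mulrC.
    apply: sep_coneZ; first by rewrite invr_ge0 ler0n.
    exact: laplacian_sep_cone sym (ptrans_eq_of_deg npg degE).
  by rewrite /trace /rhoG -mulr_suml -/(trace _) trace_laplacian // divff.
Qed.
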